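(* Let $n,m\ge1$ and $A\subseteq\Omega_n$. If $\mu_n(A)=0$, then $\mu_{n+m}(A\times\{0,1\}^m)=0$.
   Context: For $n\ge1$, $\Omega_n$ is the set of strings $\omega=\alpha_0\alpha_1\cdots\alpha_n$ with $\alpha_k\in\{0,1\}$, $\alpha_0=0$. For $\omega=\alpha_0\cdots\alpha_n$, $\omega'=\alpha'_0\cdots\alpha'_n\in\Omega_n$ let $D^n(\omega,\omega')=2^{-n}\prod_{k=1}^n i^{|\alpha_k-\alpha_{k-1}|}\prod_{k=1}^n i^{-|\alpha'_k-\alpha'_{k-1}|}\,\delta_{\alpha_n\alpha'_n}$ ($i=\sqrt{-1}$), and for $A\subseteq\Omega_n$ let $\mu_n(A)=\sum_{\omega,\omega'\in A}D^n(\omega,\omega')$ ($A$ is called precluded if $\mu_n(A)=0$). For $A\subseteq\Omega_n$, $A\times\{0,1\}^m\subseteq\Omega_{n+m}$ is the set of strings obtained by appending to the right of some $\omega\in A$ an arbitrary string of $m$ bits. *)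

From HB Require Import structures.
From mathcomp Require Import all_boot all_order all_algebra algC.
Set Implicit Arguments. Unset Strict Implicit. Unset Printing Implicit Defensive.
Import Order.TTheory GRing.Theory Num.Theory.
Local Open Scope ring_scope.

(* A string omega = alpha_0 alpha_1 ... alpha_n is a function 'I_n.+1 -> bool
   (true = 1, false = 0). *)
Notation bstr n := {ffun 'I_n.+1 -> bool}.

Definition Omega (n : nat) : {set bstr n} := [set w : bstr n | ~~ w ord0].

(* |alpha_k - alpha_{k-1}| for k = 1..n, indexed by k' : 'I_n with k = k'+1. *)
Definition jump (n : nat) (w : bstr n) (k : 'I_n) : nat :=
  (w (lift ord0 k) != w (widen_ord (leqnSn n) k)).

Definition D (n : nat) (w w' : bstr n) : algC :=
  (2 ^- n) * (\prod_(k < n) 'i ^+ jump w k) * (\prod_(k < n) 'i ^- jump w' k)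
  * (w ord_max == w' ord_max)%:R.

Definition mu (n : nat) (A : {set bstr n}) : algC :=
  \sum_(w in A) \sum_(w' in A) D w w'.

Lemma leq_ext (n m : nat) : (n.+1 <= (n + m).+1)%N.
Proof. by rewrite ltnS leq_addr. Qed.

(* A x {0,1}^m : strings in Omega_{n+m} whose first n+1 bits form a string of A *)
Definition ext (n m : nat) (A : {set bstr n}) : {set bstr (n + m)} :=
  [set w : bstr (n + m) |
    [exists v in A, [forall i : 'I_n.+1, w (widen_ord (leq_ext n m) i) == v i]]].

(* Write the amplitude of a path as the product of its factors i^{|alpha_k - alpha_(k-1)|};
   then D(w, w') = 2^-n amp(w) conj(amp(w')) [w, w' end at the same bit], so
   mu(A) = 2^-n (|S_A(0)|^2 + |S_A(1)|^2), where S_A(b) is the total amplitude of the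
   paths of A ending at b.  Hence A is precluded iff S_A(0) = S_A(1) = 0.  A path of
   A x {0,1}^m is a path v of A followed by a tail t, and its amplitude factors as
   amp(v) times an amplitude of t depending only on the last bit of v; summing,
   S_(A x {0,1}^m)(c) is a linear combination of S_A(0) and S_A(1). *)
From HB Require Import structures.
From mathcomp Require Import all_boot all_order all_algebra algC.
Import Order.TTheory GRing.Theory Num.Theory.
Set Implicit Arguments. Unset Strict Implicit.
Local Open Scope ring_scope.

Definition amplitude n (w : bstr n) : algC := \prod_(k < n) 'i ^+ jump w k.

Definition endpoint_sum n (A : {set bstr n}) (b : bool) : algC :=
  \sum_(w in A) (w ord_max == b)%:R * amplitude w.

Lemma D_amplitude n (w w' : bstr n) :
  D w w' = 2 ^- n * amplitude w * (amplitude w')^* * (w ord_max == w' ord_max)%:R.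
Proof.
rewrite /D /amplitude rmorph_prod; congr (_ * _ * _); apply: eq_bigr => k _.
by rewrite -exprVn invCi -conjCi rmorphXn.
Qed.

Lemma mu_endpoint_sum n (A : {set bstr n}) :
  mu A = 2 ^- n * \sum_(b : bool) endpoint_sum A b * (endpoint_sum A b)^*.
Proof.
rewrite /mu mulr_sumr; symmetry.
transitivity (\sum_(b : bool) \sum_(w in A) \sum_(w' in A) 2 ^- n *
  ((w ord_max == b)%:R * amplitude w * ((w' ord_max == b)%:R * amplitude w')^*)).
  apply: eq_bigr => b _; rewrite /endpoint_sum rmorph_sum mulr_suml mulr_sumr.
  by apply: eq_bigr => w _; rewrite !mulr_sumr.
rewrite exchange_big; apply: eq_bigr => w _.
rewrite exchange_big; apply: eq_bigr => w' _.
rewrite big_bool D_amplitude rmorphM /= conjC_nat.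
case: (w ord_max); case: (w' ord_max);
  rewrite /= ?mul0r ?mulr0 ?mul1r ?mulr1 ?addr0 ?add0r ?mulrA.
all: by rewrite ?rmorph0 ?mulr0.
Qed.

Lemma mu_eq0P n (A : {set bstr n}) :
  mu A = 0 <-> forall b, endpoint_sum A b = 0.
Proof.
rewrite mu_endpoint_sum; split; last first.
  by move=> end0; rewrite big1 ?mulr0 // => b _; rewrite end0 mul0r.
move=> /eqP; rewrite mulf_eq0 invr_eq0 expf_eq0 pnatr_eq0 andbF /=.
rewrite big_bool paddr_eq0 ?mul_conjC_ge0 // !mul_conjC_eq0.
by move=> /andP[/eqP end1 /eqP end0]; case.
Qed.

Section Concatenation.
Variables n m : nat.

(* The tail t is read through [v ord_max :: t], so that index 0 is the junction bit. *)
Definition catb (v : bstr n) (t : m.-tuple bool) : bstr (n + m) :=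
  [ffun i : 'I_(n + m).+1 => if (i < n)%N then v (inord i)
                             else nth (v ord_max) (v ord_max :: t) (i - n)].

Definition splitb (u : bstr (n + m)) : bstr n * m.-tuple bool :=
  ([ffun i : 'I_n.+1 => u (widen_ord (leq_ext n m) i)],
   [tuple u (inord (n + j.+1)) | j < m]).

Lemma catb_prefix v t (i : 'I_(n + m).+1) (j : 'I_n.+1) :
  val i = val j -> catb v t i = v j.
Proof.
move=> eij; rewrite ffunE eij; case: ifP => ltjn.
  by congr (v _); apply/val_inj; rewrite /= inordK // ltnS ltnW.
have ej : val j = n.
  by have := ltn_ord j; rewrite ltnS leq_eqVlt ltjn orbF => /eqP.
by rewrite ej subnn; congr (v _); apply/val_inj; rewrite ej.
Qed.

Lemma catb_suffix v t (i : 'I_(n + m).+1) (j : nat) :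
  val i = (n + j)%N -> catb v t i = nth (v ord_max) (v ord_max :: t) j.
Proof. by move=> eij; rewrite ffunE eij ltnNge leq_addr /= addKn. Qed.

Lemma catbK : cancel (fun p => catb p.1 p.2) splitb.
Proof.
case=> v t; congr (_, _).
  by apply/ffunP => i; rewrite ffunE (catb_prefix _ _ (j := i)).
apply: eq_from_tnth => j; rewrite tnth_mktuple (catb_suffix _ _ (j := j.+1)).
  by rewrite /= (tnth_nth (v ord_max)).
by rewrite /= inordK // ltnS leq_add2l.
Qed.

Lemma splitbK : cancel splitb (fun p => catb p.1 p.2).
Proof.
move=> u; apply/ffunP => i; rewrite ffunE /= !ffunE.
case: ifP => ltin.
  by congr (u _); apply/val_inj; rewrite /= inordK // ltnS ltnW.
case ei: (i - n)%N => [|j] /=.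
  congr (u _); apply/val_inj => /=.
  by apply/eqP; rewrite eqn_leq leqNgt ltin -subn_eq0 ei.
have ltjm : (j < m)%N by rewrite -ei leq_subLR -ltnS.
rewrite (nth_map (Ordinal ltjm)) ?size_enum_ord //.
congr (u _); apply/val_inj; rewrite /= nth_enum_ord // inordK; last first.
  by rewrite ltnS leq_add2l.
by rewrite -ei subnKC // leqNgt ltin.
Qed.

Lemma catb_bij : bijective (fun p : bstr n * m.-tuple bool => catb p.1 p.2).
Proof. by exists splitb; [exact: catbK | exact: splitbK]. Qed.

Lemma catb_last v t : catb v t ord_max = nth (v ord_max) (v ord_max :: t) m.
Proof. exact: catb_suffix. Qed.

Lemma mem_ext_catb (A : {set bstr n}) v t : (catb v t \in ext m A) = (v \in A).
Proof.
rewrite inE; apply/existsP/idP => [[v' /andP[Av' /forallP eqv']] | Av].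
  suff -> : v = v' by [].
  by apply/ffunP => i; move/eqP: (eqv' i) => <-; rewrite (catb_prefix _ _ (j := i)).
by exists v; rewrite Av; apply/forallP => i; rewrite (catb_prefix _ _ (j := i)).
Qed.

End Concatenation.

Definition tail_amplitude m (b : bool) (t : m.-tuple bool) : algC :=
  \prod_(k < m) 'i ^+ (nth b (b :: t) k.+1 != nth b (b :: t) k).

Lemma amplitude_catb n m (v : bstr n) (t : m.-tuple bool) :
  amplitude (catb v t) = amplitude v * tail_amplitude (v ord_max) t.
Proof.
rewrite /amplitude big_split_ord /=; congr (_ * _); apply: eq_bigr => k _; rewrite /jump.
  rewrite (catb_prefix _ _ (j := lift ord0 k)) //.
  by rewrite (catb_prefix _ _ (j := widen_ord (leqnSn n) k)).
rewrite (catb_suffix _ _ (j := k.+1)); last by rewrite /= /bump /= add1n addnS.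
by rewrite (catb_suffix _ _ (j := k)).
Qed.

Lemma endpoint_sum_ext n m (A : {set bstr n}) (c : bool) :
  endpoint_sum (ext m A) c = \sum_(b : bool) endpoint_sum A b *
    \sum_(t : m.-tuple bool) (nth b (b :: t) m == c)%:R * tail_amplitude b t.
Proof.
rewrite /endpoint_sum (reindex _ (onW_bij _ (@catb_bij n m))) /=.
rewrite (eq_bigl (fun p => (p.1 \in A) && true)); last first.
  by move=> p; rewrite /= mem_ext_catb andbT.
rewrite -(pair_big_dep (fun v => v \in A) (fun _ _ => true)
  (fun v t => (catb v t ord_max == c)%:R * amplitude (catb v t))) /=.
under [RHS]eq_bigr => b _ do rewrite mulr_suml.
rewrite [RHS]exchange_big; apply: eq_bigr => v _.
under eq_bigr => t _ do rewrite catb_last amplitude_catb mulrCA.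
rewrite big_bool /=.
by case: (v ord_max); rewrite /= ?mul1r ?mul0r ?addr0 ?add0r mulr_sumr.
Qed.

Theorem corollary3p3 (n m : nat) (A : {set bstr n}) :
  (1 <= n)%N -> (1 <= m)%N -> A \subset Omega n ->
  mu A = 0 -> mu (ext m A) = 0.
Proof.
move=> _ _ _ /mu_eq0P endA0; apply/mu_eq0P => c.
by rewrite endpoint_sum_ext big1 // => b _; rewrite endA0 mul0r.
Qed.
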